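(* Let $V,g$ be as below and let $Q_J=\tfrac43\,Q^+\nu Q^-_\tau\nu Q^+$ and $Q_R=\tfrac43\,Q^-\nu Q^+_\tau\nu Q^-$, as linear operators on $PC(V)$ (products meaning composition). Then $Q_J$ and $Q_R$ are idempotent and self-adjoint with respect to the inner product on $PC(V)$ induced by $g$; $Q_J$ has range $JC(V,g)$ and $Q_R$ has range $RC(V,g)$; and $Q_JQ_R=0$, so $JC(V,g)$ and $RC(V,g)$ are orthogonal in $PC(V)$.
   Context: $V$ is a finite-dimensional real vector space with nondegenerate symmetric bilinear form $g$. $PC(V)$ is the space of bilinear maps $T:V\times V\to L(V;V)$, identified with $V^*\otimes V^*\otimes V^*\otimes V$ and carrying the nondegenerate inner product induced by $g$. Linear involutions of $PC(V)$: $(\tau T)(u,v)=T(v,u)$; $(\alpha T)(u,v)=T(u,v)^*$ ($g$-adjoint); $\chi T$ given by $g((\chi T)(u,v)w,x)=g(T(w,x)u,v)$; $(\nu T)(u,v)w=T(w,v)u$. For such an involution $B$, $Q^\pm_B=\tfrac12(1\pm B)$. $Q^+=Q^+_\chi Q^+_\alpha Q^+_\tau$, $Q^-=Q^+_\chi Q^-_\alpha Q^-_\tau$. $\mathrm{Cycl}(T)(u,v)w=T(u,v)w+T(v,w)u+T(w,u)v$. $JC(V,g)$ (resp. $RC(V,g)$) is the set of $T$ with $\mathrm{Cycl}(T)=0$, $\chi T=T$ and $\tau T=T$ (resp. $\tau T=-T$). *)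

From mathcomp Require Import all_boot all_order all_algebra.
Set Implicit Arguments. Unset Strict Implicit. Unset Printing Implicit Defensive.
Import Order.TTheory GRing.Theory Num.Theory.
Local Open Scope ring_scope.

(* V = R^n with standard basis e_0..e_{n-1}; the symmetric bilinear form g is
   g(u,v) = sum_{a,b} u_a G_{ab} v_b, with G symmetric and invertible
   (nondegenerate).  An element T of PC(V) = V*(x)V*(x)V*(x)V is given by its
   components:  T(e_i,e_j) e_k = sum_l (T i j k l) e_l.                    *)

Definition PC (R : realFieldType) (n : nat) := 'I_n -> 'I_n -> 'I_n -> 'I_n -> R.

Section PCdefs.
Variables (R : realFieldType) (n : nat) (G : 'M[R]_n).

Definition Ginv : 'M[R]_n := invmx G.

Definition pc_add (T S : PC R n) : PC R n := fun i j k l => T i j k l + S i j k l.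
Definition pc_scale (c : R) (T : PC R n) : PC R n := fun i j k l => c * T i j k l.
Definition pc_zero : PC R n := fun _ _ _ _ => 0.

(* inner product on V*(x)V*(x)V*(x)V induced by g (g^{-1} on V*, g on V) *)
Definition pc_inner (T S : PC R n) : R :=
  \sum_(i < n) \sum_(j < n) \sum_(k < n) \sum_(l < n)
  \sum_(a < n) \sum_(b < n) \sum_(c < n) \sum_(d < n)
    Ginv i a * Ginv j b * Ginv k c * G l d * T i j k l * S a b c d.

(* lowering / raising the last index with g: lower T i j k m = g(T(e_i,e_j)e_k, e_m) *)
Definition lower (T : PC R n) : PC R n :=
  fun i j k m => \sum_(l < n) T i j k l * G l m.
Definition raise (S : PC R n) : PC R n :=
  fun i j k l => \sum_(m < n) S i j k m * Ginv m l.

Definition tau (T : PC R n) : PC R n := fun i j k l => T j i k l.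
(* (alpha T)(u,v) = T(u,v)^*  (g-adjoint):
   g((alpha T)(u,v) w, x) = g(w, T(u,v) x) = g(T(u,v) x, w) *)
Definition alpha (T : PC R n) : PC R n :=
  raise (fun i j k m => lower T i j m k).
(* g((chi T)(u,v) w, x) = g(T(w,x) u, v) *)
Definition chi (T : PC R n) : PC R n :=
  raise (fun i j k m => lower T k m i j).
Definition nu (T : PC R n) : PC R n := fun i j k l => T k j i l.

Definition Qplus_of (B : PC R n -> PC R n) (T : PC R n) : PC R n :=
  pc_scale (1/2) (pc_add T (B T)).
Definition Qminus_of (B : PC R n -> PC R n) (T : PC R n) : PC R n :=
  pc_scale (1/2) (pc_add T (pc_scale (-1) (B T))).

Definition Qplus (T : PC R n) : PC R n :=
  Qplus_of chi (Qplus_of alpha (Qplus_of tau T)).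
Definition Qminus (T : PC R n) : PC R n :=
  Qplus_of chi (Qminus_of alpha (Qminus_of tau T)).

Definition QJ (T : PC R n) : PC R n :=
  pc_scale (4/3) (Qplus (nu (Qminus_of tau (nu (Qplus T))))).
Definition QR (T : PC R n) : PC R n :=
  pc_scale (4/3) (Qminus (nu (Qplus_of tau (nu (Qminus T))))).

Definition Cycl (T : PC R n) : PC R n :=
  fun i j k l => T i j k l + T j k i l + T k i j l.

Definition JC (T : PC R n) : Prop :=
  Cycl T = pc_zero /\ chi T = T /\ tau T = T.
Definition RC (T : PC R n) : Prop :=
  Cycl T = pc_zero /\ chi T = T /\ tau T = pc_scale (-1) T.

End PCdefs.

From mathcomp Require Import all_boot all_order all_algebra.
From mathcomp Require Import ring lra.
From Stdlib Require Import FunctionalExtensionality.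
Set Implicit Arguments. Unset Strict Implicit. Unset Printing Implicit Defensive.
Import Order.TTheory GRing.Theory Num.Theory.
Local Open Scope ring_scope.

(* Lowering the last index with g, (lower T)(u,v,w,x) = g(T(u,v)w, x), is a
   linear bijection from PC(V) onto the covariant 4-tensors.  It turns tau and
   nu into transpositions of slots, alpha into the swap of slots 3 and 4 and
   chi into the swap of the two pairs of slots, and it turns the inner product
   of PC(V) into the form that contracts every slot with g^{-1}.
   For a sign e = +1 or -1 let Qsym e be the average over the dihedral group
   generated by the three swaps, twisted by the character (tau, swap34) |-> e;
   then lowering carries Q^+, Q^- to Qsym 1, Qsym (-1), and Q_J, Q_R to
   Qcov 1, Qcov (-1), where Qcov e = 4/3 Qsym e nu (1 - e tau)/2 nu Qsym e.
   Everything is then proved once for Qcov e: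
   - its range lies in sym_class e (Bianchi identity, pair symmetry, tau = e);
   - it fixes sym_class e: on such L, Qsym e L = L and Qsym e (sigma23 L)
     = -e/2 L by the Bianchi identity, which is where the factor 4/3 comes from;
   - hence it is idempotent with range exactly sym_class e;
   - it is self-adjoint, since each slot permutation is;
   - it kills tensors with tau L = -e L, so Q_J Q_R = 0, and orthogonality of
     JC and RC follows from self-adjointness of Q_J. *)

Section CovariantTensors.
Variables (R : realFieldType) (n : nat).
Local Notation PCn := (PC R n).

Lemma pc_ext (X Y : PCn) : (forall i j k l, X i j k l = Y i j k l) -> X = Y.
Proof.
move=> eqXY; do 4![apply: functional_extensionality => ?]; exact: eqXY.
Qed.

(* The slot permutations that alpha and chi become after lowering, and the
   transposition of slots 2 and 3 produced by nu tau nu. *)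
Definition swap34 (X : PCn) : PCn := fun i j k l => X i j l k.
Definition swap_pairs (X : PCn) : PCn := fun i j k l => X k l i j.
Definition sigma23 (X : PCn) : PCn := fun i j k l => X i k j l.

Definition avg (c : R) (B : PCn -> PCn) (X : PCn) : PCn :=
  pc_scale (1/2) (pc_add X (pc_scale c (B X))).

(* Covariant form of Q^+ (e = 1) and Q^- (e = -1). *)
Definition Qsym (e : R) (X : PCn) : PCn :=
  avg 1 swap_pairs (avg e swap34 (avg e (@tau R n) X)).

(* Covariant form of Q_J (e = 1) and Q_R (e = -1). *)
Definition Qcov (e : R) (X : PCn) : PCn :=
  pc_scale (4/3) (Qsym e (nu (avg (- e) (@tau R n) (nu (Qsym e X))))).

(* Covariant form of JC (e = 1) and RC (e = -1). *)
Definition sym_class (e : R) (L : PCn) : Prop :=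
  Cycl L = @pc_zero R n /\ swap_pairs L = L /\ tau L = pc_scale e L.

Local Ltac pointwise :=
  apply: pc_ext => i j k l;
  rewrite /Qcov /Qsym /avg /pc_add /pc_scale /pc_zero /Cycl /nu /tau /swap34 /swap_pairs /sigma23 /=.

Lemma pc_scale1 (X : PCn) : pc_scale 1 X = X.
Proof. by apply: pc_ext => *; rewrite /pc_scale mul1r. Qed.

Lemma pc_scaleC a b (X : PCn) : pc_scale a (pc_scale b X) = pc_scale b (pc_scale a X).
Proof. by apply: pc_ext => *; rewrite /pc_scale mulrCA. Qed.

Lemma nu_avg_tau c X : nu (avg c (@tau R n) (nu X)) = avg c sigma23 X.
Proof. by []. Qed.

Lemma Qsym_avg e c B X :
  Qsym e (avg c B X) = pc_scale (1/2) (pc_add (Qsym e X) (pc_scale c (Qsym e (B X)))).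
Proof. by pointwise; ring. Qed.

Lemma Qsym_reverse e X :
  avg e (@tau R n) (avg e swap34 (avg 1 swap_pairs X)) = Qsym e X.
Proof. by pointwise; ring. Qed.

Lemma avg_fixed c B X : c * c = 1 -> B X = pc_scale c X -> avg c B X = X.
Proof.
move=> c_sq BX; rewrite /avg BX; apply: pc_ext => i j k l.
by rewrite /pc_scale /pc_add mulrA c_sq; field.
Qed.

Section Sign.
Variable e : R.
Hypothesis sign_e : e = 1 \/ e = -1.

Lemma sign_sq : e * e = 1.
Proof. by case: sign_e => ->; rewrite ?mulrNN mul1r. Qed.

Lemma Qsym_tau X : tau (Qsym e X) = pc_scale e (Qsym e X).
Proof. by pointwise; case: sign_e => ->; ring. Qed.

Lemma Qsym_swap_pairs X : swap_pairs (Qsym e X) = Qsym e X.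
Proof. by pointwise; ring. Qed.

Lemma Qcov_Cycl X : Cycl (Qcov e X) = @pc_zero R n.
Proof. by pointwise; case: sign_e => ->; ring. Qed.

Lemma Qcov_class X : sym_class e (Qcov e X).
Proof.
split; [exact: Qcov_Cycl | split].
- by rewrite {2}/Qcov -Qsym_swap_pairs.
- by rewrite /Qcov pc_scaleC -Qsym_tau.
Qed.

Lemma Qcov_kill L : tau L = pc_scale (- e) L -> Qcov e L = @pc_zero R n.
Proof.
move=> Ltau; have avg_tau0 : avg e (@tau R n) L = @pc_zero R n.
  apply: pc_ext => i j k l; move: (congr1 (fun F => F i j k l) Ltau).
  by rewrite /avg /pc_scale /pc_add /pc_zero /= => ->; rewrite mulrA mulrN sign_sq; ring.
have Qsym_zero : Qsym e L = @pc_zero R n by rewrite /Qsym avg_tau0; pointwise; ring.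
by rewrite /Qcov Qsym_zero; pointwise; ring.
Qed.

Section Class.
Variable L : PCn.
Hypothesis L_class : sym_class e L.

Lemma class_tau a b c d : L b a c d = e * L a b c d.
Proof. by case: L_class => _ [_ /(congr1 (fun F => F a b c d))]. Qed.

Lemma class_pairs a b c d : L c d a b = L a b c d.
Proof. by case: L_class => _ [/(congr1 (fun F => F a b c d))]. Qed.

Lemma class_swap34 a b c d : L a b d c = e * L a b c d.
Proof. by rewrite -class_pairs class_tau class_pairs. Qed.

Lemma class_bianchi a b c d : L a c b d + e * L b c a d = - e * L a b c d.
Proof.
case: L_class => /(congr1 (fun F => F a b c d)) bianchi _.
move: bianchi; rewrite /Cycl /pc_zero (class_tau a c b d).
by case: sign_e => ->; lra.
Qed.

Lemma class_Qsym : Qsym e L = L.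
Proof.
case: L_class => _ [Lpairs Ltau].
have L34 : swap34 L = pc_scale e L by apply: pc_ext => *; exact: class_swap34.
have Lpairs1 : swap_pairs L = pc_scale 1 L by rewrite pc_scale1.
by rewrite /Qsym (avg_fixed sign_sq Ltau) (avg_fixed sign_sq L34) (avg_fixed (mulr1 1) Lpairs1).
Qed.

(* The eight terms of Qsym e (sigma23 L) collapse to two, which the Bianchi
   identity combines into a multiple of L. *)
Lemma class_Qsym_sigma : Qsym e (sigma23 L) = pc_scale (- e / 2) L.
Proof.
pointwise.
rewrite (class_tau i k l j) (class_tau i l k j) (class_tau j k l i) (class_tau j l k i).
rewrite (class_swap34 i k j l) (class_swap34 i l j k) (class_swap34 j k i l) (class_swap34 j l i k).
rewrite (class_pairs j k i l) (class_pairs i k j l).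
by have := class_bianchi i j k l; case: sign_e => ->; lra.
Qed.

Lemma Qcov_fixed : Qcov e L = L.
Proof.
rewrite /Qcov class_Qsym nu_avg_tau Qsym_avg class_Qsym class_Qsym_sigma.
by apply: pc_ext => *; rewrite /pc_scale /pc_add; case: sign_e => ->; field.
Qed.

End Class.
End Sign.
End CovariantTensors.

Section InnerProduct.
Variables (R : realFieldType) (n : nat) (G : 'M[R]_n).
Hypothesis Gsym : G^T = G.
Local Notation PCn := (PC R n).
Local Notation Gi := (Ginv G).

(* Multi-indices of 4-tensors, so that slot permutations act by reindexing. *)
Definition I4 := ('I_n * 'I_n * 'I_n * 'I_n)%type.
Definition entry (X : PCn) (x : I4) : R := X x.1.1.1 x.1.1.2 x.1.2 x.2.
Definition weight (x y : I4) : R :=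
  Gi x.1.1.1 y.1.1.1 * Gi x.1.1.2 y.1.1.2 * Gi x.1.2 y.1.2 * Gi x.2 y.2.

Definition ip4 (X Y : PCn) : R :=
  \sum_(x : I4) \sum_(y : I4) weight x y * entry X x * entry Y y.

Definition selfadj (F : PCn -> PCn) : Prop := forall X Y, ip4 (F X) Y = ip4 X (F Y).

Lemma Ginv_sym a b : Gi a b = Gi b a.
Proof. by rewrite /Ginv -[in LHS]Gsym -trmx_inv mxE. Qed.

Lemma ip4C X Y : ip4 X Y = ip4 Y X.
Proof.
rewrite /ip4 exchange_big; apply: eq_bigr => x _; apply: eq_bigr => y _.
by rewrite /weight !(Ginv_sym x.1.1.1, Ginv_sym x.1.1.2, Ginv_sym x.1.2, Ginv_sym x.2); ring.
Qed.

Lemma ip4_avgl c X Y Z :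
  ip4 (pc_scale (1/2) (pc_add X (pc_scale c Y))) Z = 1/2 * (ip4 X Z + c * ip4 Y Z).
Proof.
rewrite /ip4 mulr_sumr -big_split /= mulr_sumr; apply: eq_bigr => x _.
rewrite mulr_sumr -big_split /= mulr_sumr; apply: eq_bigr => y _.
by rewrite /entry /pc_scale /pc_add; ring.
Qed.

Lemma ip4_scalel c X Y : ip4 (pc_scale c X) Y = c * ip4 X Y.
Proof.
rewrite /ip4 mulr_sumr; apply: eq_bigr => x _; rewrite mulr_sumr; apply: eq_bigr => y _.
by rewrite /entry /pc_scale; ring.
Qed.

Lemma ip4_zeror X : ip4 X (@pc_zero R n) = 0.
Proof. by rewrite /ip4 big1 // => x _; rewrite big1 // => y _; rewrite /entry mulr0. Qed.

Lemma perm_selfadj (s : I4 -> I4) (F : PCn -> PCn) :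
  involutive s -> (forall x y, weight (s x) (s y) = weight x y) ->
  (forall X x, entry (F X) x = entry X (s x)) -> selfadj F.
Proof.
move=> s_inv s_weight Fs X Y; rewrite /ip4 (reindex_inj (inv_inj s_inv)).
apply: eq_bigr => x _; rewrite (reindex_inj (inv_inj s_inv)); apply: eq_bigr => y _.
by rewrite s_weight Fs Fs s_inv.
Qed.

Lemma tau_selfadj : selfadj (@tau R n).
Proof.
apply: (@perm_selfadj (fun x => (x.1.1.2, x.1.1.1, x.1.2, x.2))) => //.
- by case=> [[[a b] c] d].
- by move=> x y; rewrite /weight /=; ring.
Qed.

Lemma nu_selfadj : selfadj (@nu R n).
Proof.
apply: (@perm_selfadj (fun x => (x.1.2, x.1.1.2, x.1.1.1, x.2))) => //.
- by case=> [[[a b] c] d].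
- by move=> x y; rewrite /weight /=; ring.
Qed.

Lemma swap34_selfadj : selfadj (@swap34 R n).
Proof.
apply: (@perm_selfadj (fun x => (x.1.1.1, x.1.1.2, x.2, x.1.2))) => //.
- by case=> [[[a b] c] d].
- by move=> x y; rewrite /weight /=; ring.
Qed.

Lemma swap_pairs_selfadj : selfadj (@swap_pairs R n).
Proof.
apply: (@perm_selfadj (fun x => (x.1.2, x.2, x.1.1.1, x.1.1.2))) => //.
- by case=> [[[a b] c] d].
- by move=> x y; rewrite /weight /=; ring.
Qed.

Lemma avg_adj c B X Y : selfadj B -> ip4 (avg c B X) Y = ip4 X (avg c B Y).
Proof. by move=> B_adj; rewrite /avg ip4_avgl B_adj [RHS]ip4C ip4_avgl (ip4C Y) (ip4C (B Y)). Qed.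

(* Moving the averagings across the form reverses their order. *)
Lemma Qsym_selfadj e : selfadj (Qsym e).
Proof.
move=> X Y; rewrite /Qsym (avg_adj _ _ _ swap_pairs_selfadj).
by rewrite (avg_adj _ _ _ swap34_selfadj) (avg_adj _ _ _ tau_selfadj) Qsym_reverse.
Qed.

Lemma Qcov_selfadj e : selfadj (Qcov e).
Proof.
move=> X Y; rewrite /Qcov ip4_scalel [RHS]ip4C ip4_scalel (ip4C _ X).
rewrite Qsym_selfadj nu_selfadj (avg_adj _ _ _ tau_selfadj) nu_selfadj.
by rewrite Qsym_selfadj.
Qed.

End InnerProduct.

Section Lowering.
Variables (R : realFieldType) (n : nat) (G : 'M[R]_n).
Hypothesis Gunit : G \in unitmx.
Local Notation PCn := (PC R n).
Local Notation Gi := (Ginv G).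

Lemma contract2 (u : 'I_n -> R) (A B : 'M[R]_n) p :
  \sum_(l < n) (\sum_(m < n) u m * A m l) * B l p = ((\row_m u m) *m A *m B) 0 p.
Proof.
rewrite !mxE; apply: eq_bigr => l _; rewrite !mxE; congr (_ * _).
by apply: eq_bigr => m _; rewrite mxE.
Qed.

Lemma lower_raise (S : PCn) : lower G (raise G S) = S.
Proof. by apply: pc_ext => i j k m; rewrite /lower /raise contract2 /Ginv mulmxKV // mxE. Qed.

Lemma raise_lower (S : PCn) : raise G (lower G S) = S.
Proof. by apply: pc_ext => i j k m; rewrite /lower /raise contract2 /Ginv mulmxK // mxE. Qed.

Lemma lower_inj (X Y : PCn) : lower G X = lower G Y -> X = Y.
Proof. by move=> eqXY; rewrite -(raise_lower X) eqXY raise_lower. Qed.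

Lemma lower_add (X Y : PCn) : lower G (pc_add X Y) = pc_add (lower G X) (lower G Y).
Proof.
apply: pc_ext => i j k m; rewrite /lower /pc_add -big_split /=.
by apply: eq_bigr => l _; rewrite mulrDl.
Qed.

Lemma lower_scale c (X : PCn) : lower G (pc_scale c X) = pc_scale c (lower G X).
Proof.
apply: pc_ext => i j k m; rewrite /lower /pc_scale mulr_sumr.
by apply: eq_bigr => l _; rewrite mulrA.
Qed.

Lemma lower_zero : lower G (@pc_zero R n) = @pc_zero R n.
Proof. by apply: pc_ext => i j k m; rewrite /lower /pc_zero big1 // => l _; rewrite mul0r. Qed.

Lemma lower_Cycl (X : PCn) : lower G (Cycl X) = Cycl (lower G X).
Proof.
apply: pc_ext => i j k m; rewrite /lower /Cycl -!big_split /=.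
by apply: eq_bigr => l _; rewrite !mulrDl.
Qed.

Lemma lower_tau (X : PCn) : lower G (tau X) = tau (lower G X).
Proof. by []. Qed.

Lemma lower_nu (X : PCn) : lower G (nu X) = nu (lower G X).
Proof. by []. Qed.

Lemma lower_alpha (X : PCn) : lower G (alpha G X) = swap34 (lower G X).
Proof. exact: lower_raise. Qed.

Lemma lower_chi (X : PCn) : lower G (chi G X) = swap_pairs (lower G X).
Proof. exact: lower_raise. Qed.

Lemma lower_Qplus_of B B' (X : PCn) : (forall Y, lower G (B Y) = B' (lower G Y)) ->
  lower G (Qplus_of B X) = avg 1 B' (lower G X).
Proof.
by move=> lowerB; rewrite /Qplus_of /avg pc_scale1 lower_scale lower_add lowerB.
Qed.

Lemma lower_Qminus_of B B' (X : PCn) : (forall Y, lower G (B Y) = B' (lower G Y)) ->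
  lower G (Qminus_of B X) = avg (-1) B' (lower G X).
Proof. by move=> lowerB; rewrite /Qminus_of lower_scale lower_add lower_scale lowerB. Qed.

Lemma lower_Qplus (X : PCn) : lower G (Qplus G X) = Qsym 1 (lower G X).
Proof.
by rewrite /Qplus (lower_Qplus_of _ lower_chi) (lower_Qplus_of _ lower_alpha)
  (lower_Qplus_of _ lower_tau).
Qed.

Lemma lower_Qminus (X : PCn) : lower G (Qminus G X) = Qsym (-1) (lower G X).
Proof.
by rewrite /Qminus (lower_Qplus_of _ lower_chi) (lower_Qminus_of _ lower_alpha)
  (lower_Qminus_of _ lower_tau).
Qed.

Lemma lower_QJ (T : PCn) : lower G (QJ G T) = Qcov 1 (lower G T).
Proof.
by rewrite /QJ lower_scale lower_Qplus lower_nu (lower_Qminus_of _ lower_tau) lower_nu lower_Qplus.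
Qed.

Lemma lower_QR (T : PCn) : lower G (QR G T) = Qcov (-1) (lower G T).
Proof.
rewrite /QR lower_scale lower_Qminus lower_nu (lower_Qplus_of _ lower_tau) lower_nu lower_Qminus.
by rewrite /Qcov opprK.
Qed.

Lemma lower_class e (T : PCn) :
  (Cycl T = @pc_zero R n /\ chi G T = T /\ tau T = pc_scale e T) <-> sym_class e (lower G T).
Proof.
split=> [[Tcycl [Tchi Ttau]] | [Lcycl [Lchi Ltau]]].
  by rewrite /sym_class -lower_Cycl Tcycl lower_zero -lower_chi Tchi -lower_tau Ttau lower_scale.
by split; [|split]; apply: lower_inj; rewrite ?lower_Cycl ?lower_zero ?lower_chi ?lower_scale.
Qed.

Lemma lower_JC (T : PCn) : JC G T <-> sym_class 1 (lower G T).
Proof. by rewrite /JC -[X in tau T = X]pc_scale1; exact: lower_class. Qed.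

Lemma lower_RC (T : PCn) : RC G T <-> sym_class (-1) (lower G T).
Proof. exact: lower_class. Qed.

Section Isometry.
Hypothesis Gsym : G^T = G.

Lemma sum_pair (I J : finType) (F : I * J -> R) :
  \sum_(p : I * J) F p = \sum_(i : I) \sum_(j : J) F (i, j).
Proof. by rewrite pair_big; apply: eq_bigr => -[]. Qed.

Lemma sum8 (F : 'I_n -> 'I_n -> 'I_n -> 'I_n -> 'I_n -> 'I_n -> 'I_n -> 'I_n -> R) :
  \sum_(i < n) \sum_(j < n) \sum_(k < n) \sum_(l < n)
  \sum_(a < n) \sum_(b < n) \sum_(c < n) \sum_(d < n) F i j k l a b c d
  = \sum_(x : I4 n) \sum_(y : I4 n) F x.1.1.1 x.1.1.2 x.1.2 x.2 y.1.1.1 y.1.1.2 y.1.2 y.2.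
Proof.
rewrite !sum_pair; do 4!apply: eq_bigr => ? _.
by rewrite !sum_pair.
Qed.

Definition I3 := ('I_n * 'I_n * 'I_n)%type.

Lemma split_last (F : I3 -> 'I_n -> I3 -> 'I_n -> R) :
  \sum_(x : I4 n) \sum_(y : I4 n) F x.1 x.2 y.1 y.2 =
  \sum_(x : I3) \sum_(y : I3) \sum_(a < n) \sum_(b < n) F x a y b.
Proof.
rewrite sum_pair; apply: eq_bigr => x _; rewrite exchange_big sum_pair.
by apply: eq_bigr => y _; rewrite exchange_big.
Qed.

Lemma contract_g (u v : 'I_n -> R) :
  \sum_(a < n) \sum_(b < n) Gi a b * ((\sum_(l < n) u l * G l a) * (\sum_(m < n) v m * G m b))
  = \sum_(a < n) \sum_(b < n) G a b * (u a * v b).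
Proof.
rewrite exchange_big /=.
transitivity (\sum_(b < n) (\sum_(a < n) (\sum_(l < n) u l * G l a) * Gi a b)
                            * (\sum_(m < n) v m * G m b)).
  by apply: eq_bigr => b _; rewrite mulr_suml; apply: eq_bigr => a _; ring.
apply: eq_bigr => b _; rewrite contract2 /Ginv mulmxK // mxE mulr_sumr.
by apply: eq_bigr => m _; rewrite -{1}Gsym mxE; ring.
Qed.

Lemma inner_lower (T S : PCn) : pc_inner G T S = ip4 G (lower G T) (lower G S).
Proof.
pose W (x y : I3) := Gi x.1.1 y.1.1 * Gi x.1.2 y.1.2 * Gi x.2 y.2.
pose row3 (X : PCn) (x : I3) (a : 'I_n) := X x.1.1 x.1.2 x.2 a.
rewrite /pc_inner sum8 (split_last (fun x a y b => W x y * G a b * row3 T x a * row3 S y b)).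
rewrite /ip4 (split_last (fun x a y b => W x y * Gi a b * row3 (lower G T) x a * row3 (lower G S) y b)).
apply: eq_bigr => x _; apply: eq_bigr => y _.
transitivity (W x y * \sum_(a < n) \sum_(b < n) G a b * (row3 T x a * row3 S y b)).
  by rewrite mulr_sumr; apply: eq_bigr => a _; rewrite mulr_sumr; apply: eq_bigr => b _; ring.
rewrite -contract_g mulr_sumr; apply: eq_bigr => a _; rewrite mulr_sumr; apply: eq_bigr => b _.
by rewrite /row3 /lower; ring.
Qed.

End Isometry.
End Lowering.

Section Projectors.
Variables (R : realFieldType) (n : nat) (G : 'M[R]_n).
Hypotheses (Gsym : G^T = G) (Gunit : G \in unitmx).
Local Notation PCn := (PC R n).

Lemma lowered_projector e (Q : PCn -> PCn) :
  e = 1 \/ e = -1 -> (forall T, lower G (Q T) = Qcov e (lower G T)) ->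
  [/\ forall T, Q (Q T) = Q T,
      forall T S, pc_inner G (Q T) S = pc_inner G T (Q S) &
      forall T, (exists S, T = Q S) <-> sym_class e (lower G T)].
Proof.
move=> sign_e lowerQ; split.
- by move=> T; apply: (lower_inj Gunit); rewrite !lowerQ (Qcov_fixed sign_e (Qcov_class sign_e _)).
- by move=> T S; rewrite !inner_lower // !lowerQ Qcov_selfadj.
move=> T; split=> [[S ->] | T_class]; first by rewrite lowerQ; exact: Qcov_class.
by exists T; apply: (lower_inj Gunit); rewrite lowerQ (Qcov_fixed sign_e T_class).
Qed.

(* Q_J annihilates RC, whose elements are antisymmetric under tau. *)
Lemma QJ_RC (T : PCn) : RC G T -> QJ G T = @pc_zero R n.
Proof.
move=> /(lower_RC Gunit) [_ [_ Ltau]].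
apply: (lower_inj Gunit); rewrite (lower_QJ Gunit) lower_zero.
by apply: Qcov_kill; [left | rewrite Ltau].
Qed.

End Projectors.

Theorem mainTheorem16 (R : realFieldType) (n : nat) (G : 'M[R]_n)
  (Gsym : G^T = G) (Gnondeg : G \in unitmx) :
  (* idempotent *)
  (forall T : PC R n, QJ G (QJ G T) = QJ G T) /\
  (forall T : PC R n, QR G (QR G T) = QR G T) /\
  (* self-adjoint *)
  (forall T S : PC R n, pc_inner G (QJ G T) S = pc_inner G T (QJ G S)) /\
  (forall T S : PC R n, pc_inner G (QR G T) S = pc_inner G T (QR G S)) /\
  (* ranges *)
  (forall T : PC R n, (exists S : PC R n, T = QJ G S) <-> JC G T) /\
  (forall T : PC R n, (exists S : PC R n, T = QR G S) <-> RC G T) /\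
  (* Q_J Q_R = 0 *)
  (forall T : PC R n, QJ G (QR G T) = @pc_zero R n) /\
  (* hence JC and RC are orthogonal *)
  (forall T S : PC R n, JC G T -> RC G S -> pc_inner G T S = 0).
Proof.
have [QJ_idem QJ_adj QJ_range] :=
  lowered_projector Gsym Gnondeg (or_introl erefl) (lower_QJ Gnondeg).
have [QR_idem QR_adj QR_range] :=
  lowered_projector Gsym Gnondeg (or_intror erefl) (lower_QR Gnondeg).
have JC_range T : (exists S, T = QJ G S) <-> JC G T.
  exact: iff_trans (QJ_range T) (iff_sym (lower_JC Gnondeg T)).
have RC_range T : (exists S, T = QR G S) <-> RC G T.
  exact: iff_trans (QR_range T) (iff_sym (lower_RC Gnondeg T)).
have QJ_QR T : QJ G (QR G T) = @pc_zero R n.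
  by apply: (QJ_RC Gnondeg); apply/RC_range; exists T.
have JC_RC_orthogonal T S : JC G T -> RC G S -> pc_inner G T S = 0.
  move=> /JC_range [T' ->] S_RC.
  by rewrite QJ_adj (QJ_RC Gnondeg S_RC) inner_lower // lower_zero ip4_zeror.
split; first exact: QJ_idem.
split; first exact: QR_idem.
split; first exact: QJ_adj.
split; first exact: QR_adj.
split; first exact: JC_range.
split; first exact: RC_range.
by split; first exact: QJ_QR.
Qed.
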